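(* Let $K$ be a compact space such that any two points of $K$ are contained in a separable connected compact subset of $K$. If $K$ is almost totally disconnected, then $K$ is homeomorphic to a subspace of $\Sigma[0,1]^\Gamma$ for some set $\Gamma$.
   Context: For a set $\Gamma$, $\Sigma[0,1]^\Gamma$ is the subspace of $[0,1]^\Gamma$ (product topology) of points with countable support, and $\Sigma_0^1[0,1]^\Gamma$ is the subspace of $[0,1]^\Gamma$ consisting of those $x$ with $x_\gamma\in\{0,1\}$ for all but countably many $\gamma$. A compact space is almost totally disconnected if it is homeomorphic to a subspace of $\Sigma_0^1[0,1]^\Gamma$ for some set $\Gamma$. *)

From Stdlib Require Import Reals List.
Open Scope R_scope.

Record TopSpace := {
  carrier :> Type;
  is_open : (carrier -> Prop) -> Prop;
  open_full : is_open (fun _ => True);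
  open_inter : forall U V, is_open U -> is_open V -> is_open (fun x => U x /\ V x);
  open_union : forall (C : (carrier -> Prop) -> Prop),
      (forall U, C U -> is_open U) -> is_open (fun x => exists U, C U /\ U x)
}.

Definition countable {T : Type} (S : T -> Prop) : Prop :=
  exists g : T -> nat, forall a b, S a -> S b -> g a = g b -> a = b.

(* Compactness of a subset A of X (i.e. of A with the subspace topology). *)
Definition compact_set {X : TopSpace} (A : X -> Prop) : Prop :=
  forall C : (X -> Prop) -> Prop,
    (forall U, C U -> is_open X U) ->
    (forall x, A x -> exists U, C U /\ U x) ->
    exists l : list (X -> Prop),
      (forall U, In U l -> C U) /\ (forall x, A x -> exists U, In U l /\ U x).

Definition compact_space (X : TopSpace) : Prop := compact_set (fun _ : X => True).

(* Connectedness of a subset A (with the subspace topology). *)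
Definition connected_set {X : TopSpace} (A : X -> Prop) : Prop :=
  ~ (exists U V : X -> Prop, is_open X U /\ is_open X V /\
       (forall x, A x -> U x \/ V x) /\
       (exists x, A x /\ U x) /\ (exists x, A x /\ V x) /\
       (forall x, A x -> U x -> V x -> False)).

Definition separable_set {X : TopSpace} (A : X -> Prop) : Prop :=
  exists D : X -> Prop, (forall x, D x -> A x) /\ countable D /\
    (forall U, is_open X U -> (exists x, A x /\ U x) -> exists d, D d /\ U d).

(* Product topology on R^Gamma (restricting it to [0,1]^Gamma or its
   subspaces gives the subspace topology). Basic neighbourhoods of x are
   boxes determined by finitely many coordinates. *)
Definition prod_open {G : Type} (W : (G -> R) -> Prop) : Prop :=
  forall x, W x -> exists (l : list G) (eps : R), 0 < eps /\
    forall y, (forall g, In g l -> Rabs (y g - x g) < eps) -> W y.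

Definition embedding {X : TopSpace} {G : Type} (f : X -> (G -> R)) : Prop :=
  (forall a b, f a = f b -> a = b) /\
  (forall W, prod_open W -> is_open X (fun x => W (f x))) /\
  (forall U, is_open X U -> exists W, prod_open W /\ forall x, U x <-> W (f x)).

Definition in_Sigma {G : Type} (p : G -> R) : Prop :=
  (forall g, 0 <= p g <= 1) /\ countable (fun g => p g <> 0).

Definition in_Sigma01 {G : Type} (p : G -> R) : Prop :=
  (forall g, 0 <= p g <= 1) /\ countable (fun g => p g <> 0 /\ p g <> 1).

Definition almost_totally_disconnected (K : TopSpace) : Prop :=
  compact_space K /\
  exists (G : Type) (f : K -> (G -> R)), embedding f /\ forall x, in_Sigma01 (f x).

(* If K is almost totally disconnected, fix an embedding f of K into
   Sigma_0^1[0,1]^G and a base point x0.  Reflecting every coordinate g with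
   f x0 g = 1 (p g |-> 1 - p g) is a homeomorphism of [0,1]^G, so the
   reflected map is again an embedding, and it sends x0 to a point whose
   coordinates outside the countable set E(x0) = {g | f x0 g not in {0,1}}
   are all 0.  For another point x, take a separable connected A containing
   x0 and x with countable dense D.  If g lies outside E(x0) and outside every
   E(d), d in D, then, since the coordinate g is continuous and (0,1) is open,
   density forces f a g in {0,1} for all a in A; connectedness then makes
   a |-> f a g constant on A, so f x g = f x0 g and the reflected coordinate
   of x vanishes.  Hence the support of the reflected image of x lies in the
   countable union of E(x0) and the E(d), d in D. *)

From Stdlib Require Import Reals List Lra Classical ClassicalEpsilon FunctionalExtensionality.
From Stdlib Require Cantor.

Open Scope R_scope.

Lemma countable_sub {T : Type} (S S' : T -> Prop) :
  (forall a, S a -> S' a) -> countable S' -> countable S.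
Proof. intros H [g Hg]. exists g. intros a b Ha Hb E. apply Hg; auto. Qed.

(* A canonical injection witnessing countability, chosen once and for all,
   so that unions can be encoded through the Cantor pairing. *)
Definition count_code {T : Type} (S : T -> Prop) : T -> nat :=
  match excluded_middle_informative (countable S) with
  | left H => proj1_sig (constructive_indefinite_description _ H)
  | right _ => fun _ => 0%nat
  end.

Lemma count_code_inj {T : Type} (S : T -> Prop) : countable S ->
  forall a b, S a -> S b -> count_code S a = count_code S b -> a = b.
Proof.
  intros H. unfold count_code.
  destruct (excluded_middle_informative _) as [H'|H']; [|contradiction].
  destruct (constructive_indefinite_description _ H') as [g Hg]. exact Hg.
Qed.

Lemma countable_union {T : Type} (S1 S2 : T -> Prop) :
  countable S1 -> countable S2 -> countable (fun a => S1 a \/ S2 a).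
Proof.
  intros H1 H2.
  exists (fun a => if excluded_middle_informative (S1 a)
                   then Cantor.to_nat (0%nat, count_code S1 a)
                   else Cantor.to_nat (1%nat, count_code S2 a)).
  intros a b Ha Hb E.
  destruct (excluded_middle_informative (S1 a)) as [A1|A1];
  destruct (excluded_middle_informative (S1 b)) as [B1|B1];
  apply (f_equal Cantor.of_nat) in E; rewrite !Cantor.cancel_of_to in E;
  inversion E as [[E2]].
  - apply (count_code_inj S1 H1); auto.
  - apply (count_code_inj S2 H2); tauto.
Qed.

Definition pick_index {T U : Type} (D : T -> Prop) (P : T -> U -> Prop)
    (t0 : T) (u : U) : T :=
  match excluded_middle_informative (exists d, D d /\ P d u) with
  | left H => proj1_sig (constructive_indefinite_description _ H)
  | right _ => t0
  end.

Lemma pick_index_spec {T U : Type} (D : T -> Prop) (P : T -> U -> Prop) t0 u :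
  (exists d, D d /\ P d u) ->
  D (pick_index D P t0 u) /\ P (pick_index D P t0 u) u.
Proof.
  intros H. unfold pick_index.
  destruct (excluded_middle_informative _) as [H'|H']; [|contradiction].
  destruct (constructive_indefinite_description _ H') as [d Hd]. exact Hd.
Qed.

(* A countable union of countable sets is countable: u is coded by the pair
   (code of its chosen index d, code of u inside P d). *)
Lemma countable_bigunion {T U : Type} (D : T -> Prop) (P : T -> U -> Prop) (t0 : T) :
  countable D -> (forall d, D d -> countable (P d)) ->
  countable (fun u => exists d, D d /\ P d u).
Proof.
  intros HD HP.
  exists (fun u => let d := pick_index D P t0 u in
                   Cantor.to_nat (count_code D d, count_code (P d) u)).
  intros a b Ha Hb E. cbv zeta in E.
  destruct (pick_index_spec D P t0 a Ha) as [Da Pa].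
  destruct (pick_index_spec D P t0 b Hb) as [Db Pb].
  apply (f_equal Cantor.of_nat) in E; rewrite !Cantor.cancel_of_to in E.
  inversion E as [[E1 E2]].
  pose proof (count_code_inj D HD _ _ Da Db E1) as Ed.
  rewrite Ed in E2, Pa.
  apply (count_code_inj _ (HP _ Db)); auto.
Qed.

Definition reflect_at {G : Type} (c p : G -> R) : G -> R :=
  fun g => if Req_EM_T (c g) 1 then 1 - p g else p g.

Lemma reflect_at_involutive {G : Type} (c p : G -> R) :
  reflect_at c (reflect_at c p) = p.
Proof.
  apply functional_extensionality. intro g. unfold reflect_at.
  destruct (Req_EM_T (c g) 1); ring.
Qed.

Lemma reflect_at_dist {G : Type} (c y p : G -> R) g :
  Rabs (reflect_at c y g - reflect_at c p g) = Rabs (y g - p g).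
Proof.
  unfold reflect_at. destruct (Req_EM_T (c g) 1); auto.
  replace (1 - y g - (1 - p g)) with (- (y g - p g)) by ring. apply Rabs_Ropp.
Qed.

Lemma reflect_at_open {G : Type} (c : G -> R) (W : (G -> R) -> Prop) :
  prod_open W -> prod_open (fun p => W (reflect_at c p)).
Proof.
  intros HW x Hx. destruct (HW _ Hx) as [l [eps [He H]]].
  exists l, eps. split; auto. intros y Hy. apply H. intros g Hg.
  rewrite reflect_at_dist. auto.
Qed.

Lemma reflect_at_unit {G : Type} (c p : G -> R) g :
  0 <= p g <= 1 -> 0 <= reflect_at c p g <= 1.
Proof. unfold reflect_at. destruct (Req_EM_T (c g) 1); lra. Qed.

Lemma reflect_at_self {G : Type} (c : G -> R) g :
  c g = 0 \/ c g = 1 -> reflect_at c c g = 0.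
Proof.
  unfold reflect_at. intros [E|E]; rewrite E;
    destruct (Req_EM_T _ 1); lra.
Qed.

Lemma embedding_reflect {X : TopSpace} {G : Type} (c : G -> R) (f : X -> G -> R) :
  embedding f -> embedding (fun x => reflect_at c (f x)).
Proof.
  intros [Hinj [Hcont Hopen]]. split; [|split].
  - intros a b E. apply Hinj.
    rewrite <- (reflect_at_involutive c (f a)), <- (reflect_at_involutive c (f b)), E.
    reflexivity.
  - intros W HW. apply (Hcont (fun p => W (reflect_at c p))), reflect_at_open, HW.
  - intros U HU. destruct (Hopen U HU) as [W [HW HUW]].
    exists (fun q => W (reflect_at c q)). split; [apply reflect_at_open, HW|].
    intros x. rewrite reflect_at_involutive. apply HUW.
Qed.

Lemma prod_open_interval {G : Type} (g : G) (a b : R) :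
  prod_open (fun p : G -> R => a < p g < b).
Proof.
  intros x Hx. exists (g :: nil), (Rmin (x g - a) (b - x g)).
  split; [apply Rmin_glb_lt; lra|].
  intros y Hy. specialize (Hy g (or_introl eq_refl)).
  pose proof (Rmin_l (x g - a) (b - x g)). pose proof (Rmin_r (x g - a) (b - x g)).
  apply Rabs_def2 in Hy. lra.
Qed.

Definition exceptional {G : Type} (p : G -> R) (g : G) : Prop :=
  p g <> 0 /\ p g <> 1.

Section Coordinate.

Variables (X : TopSpace) (G : Type) (f : X -> G -> R) (g : G).
Hypothesis f_cont : forall W, prod_open W -> is_open X (fun x => W (f x)).
Hypothesis f_unit : forall x, 0 <= f x g <= 1.

(* If coordinate g is non-exceptional on a dense subset D of A, it is
   non-exceptional on all of A: otherwise the open set {0 < p g < 1} would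
   meet A but miss D. *)
Lemma binary_on_closure (A D : X -> Prop) :
  (forall U, is_open X U -> (exists x, A x /\ U x) -> exists d, D d /\ U d) ->
  (forall d, D d -> ~ exceptional (f d) g) ->
  forall a, A a -> f a g = 0 \/ f a g = 1.
Proof.
  intros Ddense Dbin a Aa. apply NNPP. intros Hb. apply not_or_and in Hb.
  destruct (f_unit a) as [B1 B2].
  destruct (Ddense (fun y => 0 < f y g < 1)) as [d [Dd Ud]].
  - apply (f_cont (fun p => 0 < p g < 1)), prod_open_interval.
  - exists a. split; auto.
    destruct Hb as [H0 H1]. split; apply Rnot_le_lt; intro; [apply H0|apply H1]; lra.
  - apply (Dbin d Dd). split; lra.
Qed.

(* A {0,1}-valued coordinate is constant on a connected set: the sets
   {p g < 1/2} and {p g > 1/2} would otherwise disconnect it. *)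
Lemma binary_constant_on_connected (A : X -> Prop) :
  connected_set A ->
  (forall a, A a -> f a g = 0 \/ f a g = 1) ->
  forall x y, A x -> A y -> f x g = f y g.
Proof.
  intros Acon HA x y Ax Ay. apply NNPP. intros Hne. apply Acon.
  exists (fun z => -1 < f z g < /2), (fun z => /2 < f z g < 2).
  split; [apply (f_cont (fun p => -1 < p g < /2)), prod_open_interval|].
  split; [apply (f_cont (fun p => /2 < p g < 2)), prod_open_interval|].
  split; [intros a Aa; destruct (HA a Aa) as [E|E]; rewrite E; [left|right]; lra|].
  destruct (HA x Ax) as [E1|E1]; destruct (HA y Ay) as [E2|E2];
    try (exfalso; apply Hne; congruence).
  - split; [exists x; split; auto; rewrite E1; lra|].
    split; [exists y; split; auto; rewrite E2; lra|]. intros; lra.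
  - split; [exists y; split; auto; rewrite E2; lra|].
    split; [exists x; split; auto; rewrite E1; lra|]. intros; lra.
Qed.

End Coordinate.

Lemma reflect_vanishes {X : TopSpace} {G : Type} (f : X -> G -> R)
    (A D : X -> Prop) (x0 x : X) (g : G) :
  (forall W, prod_open W -> is_open X (fun x => W (f x))) ->
  (forall y, 0 <= f y g <= 1) ->
  A x0 -> A x -> connected_set A ->
  (forall U, is_open X U -> (exists y, A y /\ U y) -> exists d, D d /\ U d) ->
  ~ exceptional (f x0) g -> (forall d, D d -> ~ exceptional (f d) g) ->
  reflect_at (f x0) (f x) g = 0.
Proof.
  intros Hcont Hunit Ax0 Ax Acon Ddense N0 ND.
  pose proof (binary_on_closure X G f g Hcont Hunit A D Ddense ND) as HA.
  unfold reflect_at.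
  rewrite (binary_constant_on_connected X G f g Hcont A Acon HA x x0 Ax Ax0).
  apply (reflect_at_self (f x0) g), HA, Ax0.
Qed.

Theorem mainTheorem4 (K : TopSpace) :
  compact_space K ->
  (forall x y : K, exists A : K -> Prop,
      A x /\ A y /\ separable_set A /\ connected_set A /\ compact_set A) ->
  almost_totally_disconnected K ->
  exists (G : Type) (f : K -> (G -> R)), embedding f /\ forall x, in_Sigma (f x).
Proof.
  intros _ Hconn [_ [G [f [Hemb H01]]]].
  destruct (classic (exists x0 : K, True)) as [[x0 _]|Hempty].
  2:{ exists G, f. split; [exact Hemb|].
      intros x. exfalso. apply Hempty. exists x; auto. }
  exists G, (fun x => reflect_at (f x0) (f x)).
  split; [apply embedding_reflect, Hemb|].
  intros x. split; [intros g; apply reflect_at_unit, (proj1 (H01 x))|].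
  destruct (Hconn x0 x) as [A [Ax0 [Ax [[D [_ [DC Ddense]]] [Acon _]]]]].
  apply countable_sub with
    (S' := fun g => exceptional (f x0) g \/ exists d, D d /\ exceptional (f d) g).
  - intros g Hg. apply NNPP. intros Hn. apply not_or_and in Hn as [N0 ND].
    apply Hg, (reflect_vanishes f A D); auto.
    + apply (proj1 (proj2 Hemb)).
    + intros y. apply (proj1 (H01 y)).
    + intros d Dd Ed. apply ND. exists d. auto.
  - apply countable_union; [apply (proj2 (H01 x0))|].
    apply (countable_bigunion D _ x0 DC). intros d _. apply (proj2 (H01 d)).
Qed.
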